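(* Let $\mathcal F\subseteq\mathcal G$ be two prime lattice filters of an MV-algebra $\mathcal L$. Then $$\mathcal F\sqsubseteq\!\!\to\mathcal G=J_u(\mathcal F,\mathcal K(\mathcal G))\sqsubseteq\!\!\to J_d(\mathcal G,\mathcal K(\mathcal F)).$$
   Context: $\mathcal L=(L,\oplus,\lnot,0)$ is an MV-algebra. We write $1=\lnot 0$, $x\otimes y=\lnot(\lnot x\oplus\lnot y)$, and $x\to y=\lnot x\oplus y$, and use the usual lattice order. A lattice filter is a nonempty upward-closed subset closed under $\wedge$. It is prime if it is proper and $a\vee b\in\mathcal F$ implies $a\in\mathcal F$ or $b\in\mathcal F$. For an upward-closed $\mathcal F$ and $a\in L$, let $\mathcal F_a=\{z: z\to a\notin\mathcal F\}$, $\mathcal F^+=\mathcal F_0$, and $\mathcal K(\mathcal F)=\{z : \forall a\notin\mathcal F,\ z\to a\notin\mathcal F\}$ (the kernel; it is an implication filter). An implication filter is a set $P\ni 1$ closed under modus ponens ($x, x\to y\in P\Rightarrow y\in P$). $\eta_P\colon\mathcal L\to\mathcal L/P$ is the canonical epimorphism onto the quotient by the congruence $x\sim_P y\iff x\to y,\ y\to x\in P$, and $X/P=\eta_P[X]$. We set $J_u(\mathcal F,P)=\eta_P^{-1}[\mathcal F/P]$ and $J_d(\mathcal F,P)=\big(J_u(\mathcal F^+,P)\big)^+$. For $\mathcal F\subseteq\mathcal G$ we put $\mathcal F\sqsubseteq\!\!\to\mathcal G=\bigcap_{a\in L\setminus\mathcal G}\mathcal F_a$, and in general $\mathcal F\sqsubseteq\!\!\to\mathcal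 G:=(\mathcal F\cap\mathcal G)\sqsubseteq\!\!\to\mathcal G$. *)

Set Implicit Arguments.

Record MVAlgebra := {
  mv_car :> Type;
  mv_oplus : mv_car -> mv_car -> mv_car;
  mv_neg : mv_car -> mv_car;
  mv_zero : mv_car;
  mv_assoc : forall x y z, mv_oplus x (mv_oplus y z) = mv_oplus (mv_oplus x y) z;
  mv_comm : forall x y, mv_oplus x y = mv_oplus y x;
  mv_zero_r : forall x, mv_oplus x mv_zero = x;
  mv_negK : forall x, mv_neg (mv_neg x) = x;
  mv_one_abs : forall x, mv_oplus x (mv_neg mv_zero) = mv_neg mv_zero;
  mv_luk : forall x y,
    mv_oplus (mv_neg (mv_oplus (mv_neg x) y)) y
    = mv_oplus (mv_neg (mv_oplus (mv_neg y) x)) x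
}.

Section MVDefs.
Unset Implicit Arguments.
Variable L : MVAlgebra.

Definition mv_one : L := mv_neg L (mv_zero L).
Definition mv_otimes (x y : L) : L :=
  mv_neg L (mv_oplus L (mv_neg L x) (mv_neg L y)).
Definition mv_imp (x y : L) : L := mv_oplus L (mv_neg L x) y.
Definition mv_le (x y : L) : Prop := mv_imp x y = mv_one.
Definition mv_meet (x y : L) : L := mv_otimes x (mv_imp x y).
Definition mv_join (x y : L) : L :=
  mv_oplus L (mv_neg L (mv_oplus L (mv_neg L x) y)) y.

Definition upward_closed (F : L -> Prop) : Prop :=
  forall x y, F x -> mv_le x y -> F y.

Definition lattice_filter (F : L -> Prop) : Prop :=
  (exists x, F x) /\ upward_closed F /\ (forall x y, F x -> F y -> F (mv_meet x y)).

Definition prime_lattice_filter (F : L -> Prop) : Prop :=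
  lattice_filter F /\ (exists x, ~ F x) /\
  (forall a b, F (mv_join a b) -> F a \/ F b).

Definition implication_filter (P : L -> Prop) : Prop :=
  P mv_one /\ (forall x y, P x -> P (mv_imp x y) -> P y).

Definition Fsub (F : L -> Prop) (a : L) : L -> Prop :=
  fun z => ~ F (mv_imp z a).
Definition Fplus (F : L -> Prop) : L -> Prop := Fsub F (mv_zero L).
Definition kernel (F : L -> Prop) : L -> Prop :=
  fun z => forall a, ~ F a -> ~ F (mv_imp z a).

(* congruence of an implication filter and the canonical epimorphism eta_P,
   realised as the map sending x to its equivalence class *)
Definition simP (P : L -> Prop) (x y : L) : Prop :=
  P (mv_imp x y) /\ P (mv_imp y x).
Definition etaP (P : L -> Prop) (x : L) : L -> Prop := simP P x.

Definition J_u (F P : L -> Prop) : L -> Prop :=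
  fun x => exists y, F y /\ etaP P y = etaP P x.
Definition J_d (F P : L -> Prop) : L -> Prop := Fplus (J_u (Fplus F) P).

(* F ⊑→ G := (F ∩ G) ⊑→ G = ⋂_{a ∉ G} (F ∩ G)_a *)
Definition imp_rel (F G : L -> Prop) : L -> Prop :=
  fun z => forall a, ~ G a -> Fsub (fun w => F w /\ G w) a z.

End MVDefs.

(* The argument has three layers.
   1. Two inequalities of MV-algebras, both instances of "u ⊗ ¬u = 0":
        x ≤ (y → ¬x) → ¬y       and
        y ≤ (v → ¬a) → (z → ((y → (z → a)) → ¬v)).
   2. Filter bookkeeping: the kernel K(H) acts by modus ponens on H,
      membership in J_u(F,P) is witnessed by y ∈ F with y → x ∈ P, the
      complement of J_d(G,P) is read off through ¬, and for F ⊆ G the set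
      F ⊑→ G is {z | ∀ t, z → t ∈ F ⇒ t ∈ G}.
   3. Each inclusion of the theorem combines these: the forward one uses the
      second inequality, the backward one the first. *)

From Stdlib Require Import Classical.

Section MVArithmetic.
Context {L : MVAlgebra}.
Local Notation "x + y" := (mv_oplus L x y).
Local Notation "- x" := (mv_neg L x).
Local Notation "0" := (mv_zero L).
Local Notation "x --> y" := (mv_imp L x y) (at level 55, right associativity).

Lemma oplus_0l (x : L) : 0 + x = x.
Proof. rewrite mv_comm. apply mv_zero_r. Qed.

Lemma oplus_CA (x y z : L) : x + (y + z) = y + (x + z).
Proof. rewrite !mv_assoc, (mv_comm L x y). reflexivity. Qed.

(* ¬x ⊕ x = 1, a consequence of Łukasiewicz's axiom with y = 1. *)
Lemma oplus_compl (x : L) : - x + x = - 0.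
Proof.
  pose proof (mv_luk L x (- 0)) as H.
  rewrite mv_one_abs, mv_negK, oplus_0l in H. symmetry. exact H.
Qed.

Lemma imp_refl (x : L) : x --> x = mv_one L.
Proof. apply oplus_compl. Qed.

Lemma imp_1l (x : L) : mv_one L --> x = x.
Proof. unfold mv_imp, mv_one. rewrite mv_negK. apply oplus_0l. Qed.

Lemma imp0K (x : L) : (x --> 0) --> 0 = x.
Proof. unfold mv_imp. rewrite !mv_zero_r, mv_negK. reflexivity. Qed.

(* Contraposition, x ≤ (y → ¬x) → ¬y: after unfolding, the sum
   ¬x ⊕ ¬(¬y ⊕ ¬x) ⊕ ¬y rearranges to ¬u ⊕ u = 1 with u = ¬y ⊕ ¬x. *)
Lemma le_contra (x y : L) : mv_le L x ((y --> x --> 0) --> y --> 0).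
Proof.
  unfold mv_le, mv_imp, mv_one. rewrite !mv_zero_r.
  rewrite oplus_CA, (mv_comm L (- x)). apply oplus_compl.
Qed.

(* y ⊗ z ⊗ (y → (z → a)) ≤ a and v ⊗ (v → ¬a) ≤ ¬a, so the product of the
   five factors is 0.  In the proof, Łukasiewicz's axiom turns
   ¬(¬a ⊕ ¬v) ⊕ ¬v into ¬(v ⊕ a) ⊕ a, after which the sum contains ¬u ⊕ u
   for u = ¬y ⊕ ¬z ⊕ a. *)
Lemma le_cancel (a v y z : L) :
  mv_le L y ((v --> a --> 0) --> z --> (y --> z --> a) --> v --> 0).
Proof.
  unfold mv_le, mv_imp, mv_one. rewrite !mv_zero_r.
  set (u := - y + (- z + a)).
  rewrite (oplus_CA (- y)), (mv_comm L (- u)), (oplus_CA (- z) (- v)),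
    (oplus_CA (- y) (- v)), mv_assoc.
  rewrite (mv_comm L (- v) (- a)), (mv_luk L a (- v)), mv_negK, <- mv_assoc.
  rewrite (oplus_CA a), (oplus_CA a), (mv_assoc L (- z)), (mv_assoc L (- y)).
  fold u. rewrite (mv_comm L u), oplus_compl. apply mv_one_abs.
Qed.

End MVArithmetic.

Section Filters.
Context {L : MVAlgebra}.
Local Notation "x --> y" := (mv_imp L x y) (at level 55, right associativity).
Local Notation "0" := (mv_zero L).

Lemma kernel_mp {H : L -> Prop} {k t : L} :
  kernel L H k -> H (k --> t) -> H t.
Proof. intros Kk Hkt. apply NNPP. intro nHt. exact (Kk t nHt Hkt). Qed.

Lemma kernel_one (H : L -> Prop) : kernel L H (mv_one L).
Proof. intros a Ha. rewrite imp_1l. exact Ha. Qed.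

Lemma J_u_self {F P : L -> Prop} {x : L} : F x -> J_u L F P x.
Proof. intros Fx. exists x. split; [exact Fx | reflexivity]. Qed.

(* x ∈ J_u(F,P) is witnessed by some y ∈ F with y → x ∈ P, as soon as 1 ∈ P
   (which makes y ∈ η_P(y), hence y ∈ η_P(x)). *)
Lemma J_u_witness {F P : L -> Prop} {x : L} :
  P (mv_one L) -> J_u L F P x -> exists y, F y /\ P (y --> x).
Proof.
  intros P1 [y [Fy Exy]]. exists y. split; [exact Fy |].
  assert (Syy : etaP L P y y) by (split; rewrite imp_refl; exact P1).
  rewrite Exy in Syy. exact (proj2 Syy).
Qed.

Lemma Fplus_neg {H : L -> Prop} {a : L} : Fplus L H (a --> 0) <-> ~ H a.
Proof. unfold Fplus, Fsub. rewrite imp0K. reflexivity. Qed.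

Lemma not_J_d {G P : L -> Prop} {a : L} :
  ~ J_d L G P a <-> J_u L (Fplus L G) P (a --> 0).
Proof. unfold J_d, Fplus, Fsub. split; [apply NNPP | tauto]. Qed.

Lemma imp_rel_sub {F G : L -> Prop} :
  (forall x, F x -> G x) ->
  forall z, imp_rel L F G z <-> forall t, F (z --> t) -> G t.
Proof.
  intros FG z. unfold imp_rel, Fsub. split.
  - intros HL t Ft. apply NNPP. intro nGt. exact (HL t nGt (conj Ft (FG _ Ft))).
  - intros HL a nGa [Fa _]. exact (nGa (HL a Fa)).
Qed.

End Filters.

Section Theorem9.
Context {L : MVAlgebra} {F G : L -> Prop}.
Hypothesis F_up : upward_closed L F.
Hypothesis FG : forall x, F x -> G x.
Local Notation "x --> y" := (mv_imp L x y) (at level 55, right associativity).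
Local Notation "0" := (mv_zero L).
Local Notation A := (J_u L F (kernel L G)).
Local Notation B := (J_d L G (kernel L F)).

(* F ⊑→ G ⊆ A ⊑→ B (F ⊑→ G as in imp_rel_sub): for a ∉ B and z → a ∈ A,
   pick v ∈ G^+ with v → ¬a ∈ K(F) and y ∈ F with y → (z → a) ∈ K(G);
   le_cancel, the two kernels and the hypothesis on z then force ¬v ∈ G,
   contradicting v ∈ G^+. *)
Lemma imp_rel_J_intro (z : L) :
  (forall t, F (z --> t) -> G t) -> imp_rel L A B z.
Proof.
  intros Hz a nBa [Aza _].
  apply not_J_d in nBa.
  destruct (J_u_witness (kernel_one F) nBa) as [v [Gv Kv]].
  destruct (J_u_witness (kernel_one G) Aza) as [y [Fy Ky]].
  apply Gv. apply (kernel_mp Ky). apply Hz. apply (kernel_mp Kv).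
  exact (F_up _ _ Fy (le_cancel a v y z)).
Qed.

(* A ⊑→ B ⊆ F ⊑→ G (F ⊑→ G as in imp_rel_sub): if z → t ∈ F but t ∉ G,
   then t ∉ B (as ¬t ∈ G^+), while z → t lies in A trivially and in B by
   le_contra, against z ∈ A ⊑→ B. *)
Lemma imp_rel_J_elim (z : L) :
  imp_rel L A B z -> forall t, F (z --> t) -> G t.
Proof.
  intros Hz t Ft. apply NNPP. intros nGt.
  apply (Hz t).
  - apply not_J_d, J_u_self, Fplus_neg, nGt.
  - split; [exact (J_u_self Ft) |].
    intros Bzt. destruct (J_u_witness (kernel_one F) Bzt) as [y [Gy Ky]].
    apply Gy, FG, (kernel_mp Ky). exact (F_up _ _ Ft (le_contra (z --> t) y)).
Qed.

End Theorem9.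

Theorem mainTheorem9 (L : MVAlgebra) (F G : L -> Prop) :
  prime_lattice_filter L F -> prime_lattice_filter L G ->
  (forall x, F x -> G x) ->
  forall z : L,
    imp_rel L F G z <->
    imp_rel L (J_u L F (kernel L G)) (J_d L G (kernel L F)) z.
Proof.
  intros [[_ [F_up _]] _] _ FG z. rewrite (imp_rel_sub FG z). split.
  - exact (imp_rel_J_intro F_up z).
  - exact (imp_rel_J_elim F_up FG z).
Qed.
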